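(* Let $b\ge1$, $n\ge1$. Let $K_{n+1}$ be the capacity of the bucket containing label $n+1$ in the random tree of size $n+1$, and let $N_{n,m}$ ($1\le m\le b$) be the number of nodes of capacity $m$ in the random tree of size $n$, both generated by the same growth process. Then for $2\le m\le b$, $$\mathbb P\{K_{n+1}=m\}=\mathbb E(N_{n,m-1})\cdot\begin{cases}\frac{m-1}{n},&\text{bucket recursive trees},\\ \frac{(d-1)(m-1)+1}{(d-1)n+1},&\text{$(b,d)$-ary increasing trees},\\ \frac{(\alpha+1)(m-1)-1}{(\alpha+1)n-1},&\text{$(b,\alpha)$-PORTs},\end{cases}$$ and $$\mathbb P\{K_{n+1}=1\}=\begin{cases}\mathbb E(N_{n,b})\frac bn,&\text{bucket recursive trees},\\ \mathbb E(N_{n,b})\frac{(d-1)b+1}{(d-1)n+1}+\frac{1-\sum_{j=1}^b\mathbb E(N_{n,j})}{(d-1)n+1},&\text{$(b,d)$-ary increasing trees},\\ \mathbb E(N_{n,b})\frac{(\alpha+1)b-1}{(\alpha+1)n-1}+\frac{-1+\sum_{j=1}^b\mathbb E(N_{n,j})}{(\alpha+1)n-1},&\text{$(b,\alpha)$-PORTs}.\end{cases}$$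
   Context: Fix $b\ge1$. A bucket tree is a rooted unordered tree whose nodes (''buckets'') $v$ contain $c(v)\in\{1,\dots,b\}$ labels (capacity); $v$ is saturated if $c(v)=b$, and every node with a child is saturated; $d^+(v)$ is its number of children; the size is the total number of labels. Growth process: start with a root bucket containing label 1; given the tree of size $n\ge1$, choose a node $v$ with probability $p(v)$; if $v$ is unsaturated, add label $n+1$ to $v$, otherwise attach to $v$ a new child bucket containing only $n+1$. The families: bucket recursive trees $p(v)=c(v)/n$; $(b,d)$-ary increasing trees ($d\ge2$ integer) $p(v)=\frac{(d-1)c(v)+1-d^+(v)}{(d-1)n+1}$; $(b,\alpha)$-plane oriented recursive trees, $(b,\alpha)$-PORTs ($\alpha>0$) $p(v)=\frac{d^+(v)+(\alpha+1)c(v)-1}{(\alpha+1)n-1}$ (capacities and out-degrees in the current tree of size $n$). *)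

From mathcomp Require Import all_boot all_order all_algebra.
Set Implicit Arguments. Unset Strict Implicit. Unset Printing Implicit Defensive.
Import Order.TTheory GRing.Theory Num.Theory.
Local Open Scope ring_scope.

(* A bucket tree is encoded as a sequence of nodes (buckets), node i being
   the pair (capacity c(i), index of parent of i).  Node 0 is the root (its
   parent field is irrelevant, set to 0); every other node i has a parent
   index < i.  Rooted unordered tree: the order of the list only records
   creation order. *)
Definition btree := seq (nat * nat).

Definition cap (t : btree) (v : nat) : nat := (nth (0, 0) t v).1.
Definition par (t : btree) (v : nat) : nat := (nth (0, 0) t v).2.
Definition outdeg (t : btree) (v : nat) : nat :=
  count (fun i => par t i == v) (iota 1 (size t).-1).
(* size = total number of labels *)
Definition tsize (t : btree) : nat := sumn (map fst t).

Definition grow (b : nat) (t : btree) (v : nat) : btree :=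
  if (cap t v < b)%N then set_nth (0, 0) t v ((cap t v).+1, par t v)
  else rcons t (1, v)%N.
Definition newnode (b : nat) (t : btree) (v : nat) : nat :=
  if (cap t v < b)%N then v else size t.

Inductive family (R : Type) :=
| BRT
| Dary of nat
| PORT of R.
Arguments BRT {R}.

Definition prob (R : realFieldType) (fam : family R) (t : btree) (v : nat) : R :=
  match fam with
  | BRT => (cap t v)%:R / (tsize t)%:R
  | Dary d => ((d%:R - 1) * (cap t v)%:R + 1 - (outdeg t v)%:R)
              / ((d%:R - 1) * (tsize t)%:R + 1)
  | PORT a => ((outdeg t v)%:R + (a + 1) * (cap t v)%:R - 1)
              / ((a + 1) * (tsize t)%:R - 1)
  end.

(* law k = the exact law of the random tree of size k.+1, as a finite list
   of (probability, tree) pairs *)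
Fixpoint law (R : realFieldType) (b : nat) (fam : family R) (k : nat)
  : seq (R * btree) :=
  match k with
  | 0 => [:: (1, [:: (1%N, 0%N)])]
  | k'.+1 =>
    flatten [seq [seq (pt.1 * prob fam pt.2 v, grow b pt.2 v)
                 | v <- iota 0 (size pt.2)]
            | pt <- law b fam k']
  end.

Definition EN (R : realFieldType) (b : nat) (fam : family R) (n m : nat) : R :=
  \sum_(pt <- law b fam n.-1) pt.1 * (count (fun x => x.1 == m) pt.2)%:R.

Definition PK (R : realFieldType) (b : nat) (fam : family R) (n m : nat) : R :=
  \sum_(pt <- law b fam n.-1) \sum_(v <- iota 0 (size pt.2))
     pt.1 * prob fam pt.2 v
     * (cap (grow b pt.2 v) (newnode b pt.2 v) == m)%:R.

From Pilot Require Import Defs.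
From mathcomp Require Import all_boot all_order all_algebra.
From mathcomp Require Import zify ring lra.
Import Order.TTheory GRing.Theory Num.Theory.
Set Implicit Arguments. Unset Strict Implicit. Unset Printing Implicit Defensive.
Local Open Scope ring_scope.

(* Label n+1 lands in a bucket of capacity m >= 2 exactly when the chosen node
   is an unsaturated node of capacity m-1, and in a new bucket of capacity 1
   exactly when the chosen node is saturated.  In all three families p(v) is
   determined by c(v), d+(v) and the tree size, and unsaturated nodes are
   leaves.  Hence, given the tree, P{K = m} is a fixed multiple of N_{m-1}, and
   P{K = 1} is a fixed multiple of N_b plus a multiple of the total out-degree,
   which is the number of nodes minus one, i.e. sum_j N_j - 1.  Averaging over
   the law of the tree, whose total mass is 1, gives the formulas. *)

Lemma natr_count (R : pzSemiRingType) (T : Type) (P : pred T) (s : seq T) :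
  (count P s)%:R = \sum_(x <- s) (P x)%:R :> R.
Proof. by rewrite -sumn_count sumnE big_map natr_sum. Qed.

Lemma sum_eq_mem (T : eqType) (x : T) (r : seq T) :
  uniq r -> (\sum_(v <- r) (x == v))%N = (x \in r).
Proof.
move=> r_uniq; rewrite -big_mkcond /= sum1_count -count_uniq_mem //.
by apply: eq_count => v; rewrite eq_sym.
Qed.

Lemma sum_count_eq_size (T V : eqType) (f : T -> V) (r : seq V) (s : seq T) :
  uniq r -> {in s, forall i, f i \in r} ->
  (\sum_(v <- r) count (fun i => f i == v) s)%N = size s.
Proof.
move=> r_uniq; elim: s => [|i s IHs] f_r /=; first by rewrite big1.
rewrite big_split /= IHs => [|j js]; last by apply: f_r; rewrite inE js orbT.
by rewrite sum_eq_mem // f_r ?mem_head.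
Qed.

Definition bucket_tree (b : nat) (t : btree) : Prop :=
  [/\ (0 < size t)%N,
      forall v, (v < size t)%N -> (0 < cap t v <= b)%N &
      forall v, (0 < v < size t)%N -> (par t v < size t)%N /\ cap t (par t v) = b].

Lemma tsizeE (t : btree) : Defs.tsize t = (\sum_(v <- iota 0 (size t)) cap t v)%N.
Proof. by rewrite /Defs.tsize sumnE big_map -{1}(mkseq_nth (0, 0)%N t) /mkseq big_map. Qed.

Lemma count_nodesE (P : pred (nat * nat)) (t : btree) :
  count P t = count (fun v => P (nth (0, 0)%N t v)) (iota 0 (size t)).
Proof. by rewrite -{1}(mkseq_nth (0, 0)%N t) /mkseq count_map. Qed.

Section BucketTree.

Variables (b : nat) (t : btree).
Hypothesis t_bucket : bucket_tree b t.

Lemma outdeg_unsaturated v : (cap t v < b)%N -> outdeg t v = 0%N.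
Proof.
case: t_bucket => _ _ par_sat cap_v; apply/eqP; rewrite -leqn0 leqNgt -has_count.
apply/hasP => -[i]; rewrite mem_iota => i_t /eqP par_i.
by have [_] := par_sat i ltac:(lia); rewrite par_i => cap_b; rewrite cap_b ltnn in cap_v.
Qed.

Lemma tsize_gt0 : (0 < Defs.tsize t)%N.
Proof.
case: t_bucket => t_gt0 cap_t _; rewrite tsizeE -(prednK t_gt0) big_cons.
by rewrite ltn_addr //; case/andP: (cap_t 0 t_gt0).
Qed.

Lemma sum_outdeg : (\sum_(v <- iota 0 (size t)) outdeg t v)%N = (size t).-1.
Proof.
case: t_bucket => t_gt0 _ par_sat.
rewrite sum_count_eq_size ?iota_uniq ?size_iota // => i; rewrite !mem_iota => i_t.
by have [] := par_sat i ltac:(lia); lia.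
Qed.

Lemma sum_count_cap :
  (\sum_(1 <= j < b.+1) count (fun x => x.1 == j) t)%N = size t.
Proof.
case: t_bucket => _ cap_t _.
under eq_bigr do rewrite count_nodesE.
rewrite sum_count_eq_size ?iota_uniq ?size_iota // => v.
by rewrite !mem_iota add0n subn1 add1n ltnS => /andP[_ /cap_t].
Qed.

End BucketTree.

Lemma cap_newnode b t v : (v < size t)%N ->
  cap (grow b t v) (newnode b t v) = if (cap t v < b)%N then (cap t v).+1 else 1%N.
Proof.
move=> v_t; rewrite /grow /newnode /cap; case: ifP => _.
  by rewrite nth_set_nth /= eqxx.
by rewrite nth_rcons ltnn eqxx.
Qed.

Lemma tsize_grow b t v : (v < size t)%N -> Defs.tsize (grow b t v) = (Defs.tsize t).+1.
Proof.
move=> v_t; rewrite /grow; case: ifP => _; last first.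
  by rewrite /Defs.tsize map_rcons sumn_rcons /= addn1.
rewrite !tsizeE size_set_nth (maxn_idPr v_t).
rewrite (eq_bigr (fun i => cap t i + (v == i))%N) => [|i _]; last first.
  by rewrite /cap nth_set_nth /= eq_sym; case: eqP => [->|]; rewrite ?addn1 ?addn0.
by rewrite big_split /= sum_eq_mem ?iota_uniq ?mem_iota // add0n v_t addn1.
Qed.

Section Grow.

Variables (b : nat) (t : btree) (v : nat).
Hypotheses (t_bucket : bucket_tree b t) (v_t : (v < size t)%N).

Lemma bucket_tree_fill : (cap t v < b)%N ->
  bucket_tree b (set_nth (0, 0)%N t v ((cap t v).+1, par t v)).
Proof.
move=> v_unsat; case: t_bucket => t_gt0 cap_t par_sat.
set t' := set_nth _ _ _ _.
have size_t' : size t' = size t by rewrite size_set_nth (maxn_idPr v_t).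
have cap_t' i : cap t' i = if i == v then (cap t v).+1 else cap t i.
  by rewrite /cap nth_set_nth /=; case: eqP => // ->.
have par_t' i : par t' i = par t i.
  by rewrite /par nth_set_nth /=; case: eqP => // ->.
split; rewrite size_t' // => i i_t; rewrite ?par_t' cap_t'.
  by case: eqP => _; [have := cap_t v v_t; lia | exact: cap_t].
have [par_i cap_par] := par_sat i i_t; split => //.
by case: eqP => [par_v|_] //; rewrite -par_v cap_par ltnn in v_unsat.
Qed.

Lemma bucket_tree_attach : cap t v = b -> bucket_tree b (rcons t (1, v)%N).
Proof.
move=> v_sat; case: t_bucket => _ cap_t par_sat.
have cap_t' i : cap (rcons t (1, v)%N) i =
    if (i < size t)%N then cap t i else if i == size t then 1%N else 0%N.
  by rewrite /cap nth_rcons; case: ifP => //; case: ifP.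
have par_t' i : (i < size t)%N -> par (rcons t (1, v)%N) i = par t i.
  by move=> i_t; rewrite /par nth_rcons i_t.
have b_gt0 : (0 < b)%N by rewrite -v_sat; have := cap_t v v_t; lia.
split; rewrite size_rcons // => i i_t.
  by rewrite cap_t'; case: ifP => [/cap_t //|i_ge]; case: eqP => //; lia.
case: (ltnP i (size t)) => i_lt.
  have [par_i cap_par] := par_sat i ltac:(lia).
  by rewrite par_t' // cap_t' par_i; split => //; lia.
have -> : i = size t by lia.
by rewrite /par nth_rcons ltnn eqxx /= cap_t' v_t; split => //; lia.
Qed.

Lemma bucket_tree_grow : bucket_tree b (grow b t v).
Proof.
rewrite /grow; case: ifPn => [|v_sat]; first exact: bucket_tree_fill.
by apply: bucket_tree_attach; case: t_bucket => _ /(_ v v_t); lia.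
Qed.

End Grow.

Definition valid_family (R : realFieldType) (fam : Defs.family R) : Prop :=
  match fam with BRT => True | Dary d => (2 <= d)%N | PORT alpha => 0 < alpha end.

Definition PK_given (R : realFieldType) (b : nat) (fam : Defs.family R) (t : btree) (m : nat)
  : R :=
  \sum_(v <- iota 0 (size t)) prob fam t v * (cap (grow b t v) (newnode b t v) == m)%:R.

Section Law.

Variables (R : realFieldType) (b : nat) (fam : Defs.family R).
Hypothesis b_gt0 : (0 < b)%N.

Lemma law_support k pt :
  pt \in law b fam k -> bucket_tree b pt.2 /\ Defs.tsize pt.2 = k.+1.
Proof.
elim: k pt => [|k IHk] pt /=.
  by rewrite inE => /eqP -> /=; split => //; split => // -[|v] //= _; rewrite b_gt0.
case/flattenP => _ /mapP[pt0 pt0_law ->] /mapP[v]; rewrite mem_iota => v_t -> /=.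
have [pt0_bucket pt0_size] := IHk pt0 pt0_law.
by rewrite tsize_grow ?pt0_size //; split => //; apply: bucket_tree_grow.
Qed.

Lemma sum_outdeg_natr t : bucket_tree b t ->
  \sum_(v <- iota 0 (size t)) (outdeg t v)%:R = (size t)%:R - 1 :> R.
Proof.
by move=> t_bucket; rewrite -natr_sum (sum_outdeg t_bucket) -subn1 natrB //; case: t_bucket.
Qed.

Lemma sum_prob t : valid_family fam -> bucket_tree b t ->
  \sum_(v <- iota 0 (size t)) prob fam t v = 1.
Proof.
move=> fam_valid t_bucket; have n_gt0 := tsize_gt0 t_bucket.
set n := Defs.tsize t.
have sum_cap : \sum_(v <- iota 0 (size t)) (cap t v)%:R = n%:R :> R.
  by rewrite -natr_sum -tsizeE.
have sum_one : \sum_(v <- iota 0 (size t)) 1 = (size t)%:R :> R.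
  by rewrite -(subn0 (size t)) -/(index_iota 0 _) sumr_const_nat.
case: fam fam_valid => [|d|alpha] /= fam_valid; rewrite -mulr_suml.
- by rewrite sum_cap divff // pnatr_eq0 -lt0n.
- rewrite sumrB big_split /= -big_distrr /= sum_cap sum_one (sum_outdeg_natr t_bucket) -/n.
  have den_gt0 : 0 < (d%:R - 1) * n%:R + 1 :> R.
    by rewrite ltr_wpDl ?mulr_ge0 // subr_ge0 ler1n; lia.
  rewrite [X in X / _](_ : _ = (d%:R - 1) * n%:R + 1) ?divff ?gt_eqF //; ring.
- rewrite sumrB big_split /= -big_distrr /= sum_cap sum_one (sum_outdeg_natr t_bucket) -/n.
  have den_gt0 : 0 < (alpha + 1) * n%:R - 1 :> R.
    have : 1 <= n%:R :> R by rewrite ler1n.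
    nra.
  rewrite [X in X / _](_ : _ = (alpha + 1) * n%:R - 1) ?divff ?gt_eqF //; ring.
Qed.

Lemma law_mass k : valid_family fam -> \sum_(pt <- law b fam k) pt.1 = 1.
Proof.
move=> fam_valid; elim: k => [|k IHk] /=; first by rewrite big_seq1.
rewrite big_flatten /= big_map -[RHS]IHk; apply: eq_big_seq => pt pt_law.
have [pt_bucket _] := law_support pt_law.
by rewrite big_map /= -big_distrr /= sum_prob // mulr1.
Qed.

Lemma PKE k m : PK b fam k.+1 m = \sum_(pt <- law b fam k) pt.1 * PK_given b fam pt.2 m.
Proof.
by apply: eq_bigr => pt _; rewrite big_distrr; apply: eq_bigr => v _ /=; rewrite mulrA.
Qed.

Section GivenTree.

Variables (t : btree) (c : R).
Hypothesis t_bucket : bucket_tree b t.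

Lemma PK_given_ge2 m : (2 <= m <= b)%N ->
    (forall v, cap t v = m.-1 -> outdeg t v = 0%N -> prob fam t v = c) ->
  PK_given b fam t m = c * (count (fun x => x.1 == m.-1) t)%:R.
Proof.
move=> m_range prob_v; case: t_bucket => _ cap_t _.
rewrite /PK_given count_nodesE natr_count big_distrr; apply: eq_big_seq => v.
rewrite mem_iota => /andP[_ v_t]; rewrite cap_newnode //= -/(cap t v).
have := cap_t v v_t; case: (cap t v =P m.-1) => [cap_v | cap_v] cap_vb.
  have v_unsat : (cap t v < b)%N by rewrite cap_v; lia.
  rewrite v_unsat cap_v prednK ?eqxx; last lia.
  by rewrite prob_v ?(outdeg_unsaturated t_bucket).
rewrite (_ : _ == m = false) ?mulr0 //; apply/negbTE/eqP; case: ifP => _; lia.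
Qed.

Lemma PK_given_1 (o : R) :
    (forall v, cap t v = b -> prob fam t v = c + (outdeg t v)%:R * o) ->
  PK_given b fam t 1 = c * (count (fun x => x.1 == b) t)%:R + ((size t)%:R - 1) * o.
Proof.
move=> prob_v; case: t_bucket => _ cap_t _.
rewrite -(sum_outdeg_natr t_bucket) mulr_suml count_nodesE.
rewrite natr_count big_distrr -big_split /=; apply: eq_big_seq => v.
rewrite mem_iota => /andP[_ v_t]; rewrite cap_newnode //= -/(cap t v).
have := cap_t v v_t; case: (cap t v =P b) => [cap_v | cap_v] cap_vb.
  by rewrite cap_v ltnn prob_v // !mulr1 mulrC.
have v_unsat : (cap t v < b)%N by lia.
rewrite v_unsat (outdeg_unsaturated t_bucket v_unsat) eqSS eqn0Ngt.
by case/andP: cap_vb => -> _; rewrite !mulr0 mul0r addr0.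
Qed.

End GivenTree.

Lemma PK_ge2 k m c : (2 <= m <= b)%N ->
    (forall t, bucket_tree b t -> Defs.tsize t = k.+1 ->
       forall v, cap t v = m.-1 -> outdeg t v = 0%N -> prob fam t v = c) ->
  PK b fam k.+1 m = EN b fam k.+1 m.-1 * c.
Proof.
move=> m_range prob_v; rewrite PKE /EN mulr_suml; apply: eq_big_seq => pt pt_law.
have [pt_bucket pt_size] := law_support pt_law.
by rewrite (PK_given_ge2 pt_bucket m_range (prob_v _ pt_bucket pt_size)) mulrA mulrAC.
Qed.

Lemma sum_EN k : \sum_(1 <= j < b.+1) EN b fam k.+1 j =
  \sum_(pt <- law b fam k) pt.1 * (size pt.2)%:R.
Proof.
rewrite exchange_big /=; apply: eq_big_seq => pt pt_law.
have [pt_bucket _] := law_support pt_law.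
by rewrite -big_distrr /= -natr_sum sum_count_cap.
Qed.

Lemma PK_1 k c o : valid_family fam ->
    (forall t, bucket_tree b t -> Defs.tsize t = k.+1 ->
       forall v, cap t v = b -> prob fam t v = c + (outdeg t v)%:R * o) ->
  PK b fam k.+1 1 = EN b fam k.+1 b * c + (\sum_(1 <= j < b.+1) EN b fam k.+1 j - 1) * o.
Proof.
move=> fam_valid prob_v; rewrite PKE sum_EN -[X in _ - X](law_mass k fam_valid).
rewrite /EN -sumrB !mulr_suml -big_split /=; apply: eq_big_seq => pt pt_law.
have [pt_bucket pt_size] := law_support pt_law.
by rewrite (PK_given_1 pt_bucket (prob_v _ pt_bucket pt_size)); ring.
Qed.

End Law.

Theorem mainTheorem5 (R : realFieldType) (b n d : nat) (alpha : R) :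
  (1 <= b)%N -> (1 <= n)%N -> (2 <= d)%N -> 0 < alpha ->
  (forall m : nat, (2 <= m <= b)%N ->
     [/\ PK b (@BRT R) n m = EN b (@BRT R) n m.-1 * (m.-1%:R / n%:R),
         PK b (Dary R d) n m = EN b (Dary R d) n m.-1 *
            (((d%:R - 1) * m.-1%:R + 1) / ((d%:R - 1) * n%:R + 1)) &
         PK b (PORT alpha) n m = EN b (PORT alpha) n m.-1 *
            (((alpha + 1) * m.-1%:R - 1) / ((alpha + 1) * n%:R - 1))]) /\
  [/\ PK b (@BRT R) n 1 = EN b (@BRT R) n b * (b%:R / n%:R),
      PK b (Dary R d) n 1 =
        EN b (Dary R d) n b * (((d%:R - 1) * b%:R + 1) / ((d%:R - 1) * n%:R + 1))
        + (1 - \sum_(1 <= j < b.+1) EN b (Dary R d) n j) / ((d%:R - 1) * n%:R + 1) &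
      PK b (PORT alpha) n 1 =
        EN b (PORT alpha) n b * (((alpha + 1) * b%:R - 1) / ((alpha + 1) * n%:R - 1))
        + (-1 + \sum_(1 <= j < b.+1) EN b (PORT alpha) n j) / ((alpha + 1) * n%:R - 1)].
Proof.
move=> b_gt0 n_gt0 d_ge2 alpha_gt0; case: n n_gt0 => [//|k] _.
split=> [m m_range|]; first split.
- by apply: PK_ge2 => // t _ t_size v cap_v _; rewrite /prob cap_v t_size.
- by apply: PK_ge2 => // t _ t_size v cap_v deg_v; rewrite /prob cap_v deg_v t_size subr0.
- by apply: PK_ge2 => // t _ t_size v cap_v deg_v; rewrite /prob cap_v deg_v t_size add0r.
split.
- rewrite (PK_1 b_gt0 (c := b%:R / k.+1%:R) (o := 0)) //; first by ring.
  by move=> t _ t_size v cap_v; rewrite /prob cap_v t_size; ring.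
- set D := (d%:R - 1) * k.+1%:R + 1.
  rewrite (PK_1 b_gt0 (c := ((d%:R - 1) * b%:R + 1) / D) (o := - 1 / D)) //.
    by ring.
  by move=> t _ t_size v cap_v; rewrite /prob cap_v t_size -/D; ring.
- set D := (alpha + 1) * k.+1%:R - 1.
  rewrite (PK_1 b_gt0 (c := ((alpha + 1) * b%:R - 1) / D) (o := 1 / D)) //.
    by ring.
  by move=> t _ t_size v cap_v; rewrite /prob cap_v t_size -/D; ring.
Qed.
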